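(* Let $\mathbf P=(P,\leq,{}',0,1)$ be an orthogonal poset which is a Boolean poset, where the antitone involution ${}'$ is the complementation of $P$ (i.e. $x'$ is the complement of $x$ for each $x\in P$). Then $\mathbf P$ is an orthomodular poset, i.e. for all $x,y\in P$ with $x\leq y$ we have $x\vee(y\wedge x')=y$.
   Context: For a subset $A$ of a poset $(P,\le)$, $L(A)=\{z\in P: z\le a \text{ for all } a\in A\}$ and $U(A)=\{z\in P: a\le z \text{ for all } a\in A\}$; we write $L(x,y)$ for $L(\{x,y\})$, $LU(A)$ for $L(U(A))$, $L(A,z)$ for $L(A\cup\{z\})$, etc. A bounded poset $(P,\le,{}',0,1)$ with an antitone involution means ${}'$ satisfies $x\le y\Rightarrow y'\le x'$ and $x''=x$. Elements $x,y$ are orthogonal, $x\perp y$, if $x\le y'$. The poset is orthogonal if $x\vee y$ (supremum) exists whenever $x\perp y$. An element $y$ is a complement of $x$ if $L(x,y)=L(P)$ and $U(x,y)=U(P)$; the poset is complemented if every element has a complement. The poset is distributive if $L(U(x,y),z)=LU(L(x,z),L(y,z))$ for all $x,y,z$ (equivalently any of the dual LU-identities), and Boolean if it is distributive and complemented. An orthomodular poset is an orthogonal poset satisfying: $x\le y$ implies $x\vee(y\wedge x')=y$ (here $y\wedge x'=(y'\vee x)'$ exists by orthogonality). *)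

Set Implicit Arguments.

Section PosetDefs.
Variable T : Type.
Variable le : T -> T -> Prop.

Definition setP : T -> Prop := fun _ => True.
Definition pair (x y : T) : T -> Prop := fun w => w = x \/ w = y.
Definition setU1 (A : T -> Prop) (z : T) : T -> Prop := fun w => A w \/ w = z.
Definition setUn (A B : T -> Prop) : T -> Prop := fun w => A w \/ B w.
Definition set_eq (A B : T -> Prop) : Prop := forall w, A w <-> B w.

Definition Lc (A : T -> Prop) : T -> Prop := fun z => forall a, A a -> le z a.
Definition Uc (A : T -> Prop) : T -> Prop := fun z => forall a, A a -> le a z.

Definition partial_order : Prop :=
  (forall x, le x x) /\
  (forall x y, le x y -> le y x -> x = y) /\
  (forall x y z, le x y -> le y z -> le x z).

Definition is_sup (x y s : T) : Prop :=
  le x s /\ le y s /\ forall u, le x u -> le y u -> le s u.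
Definition is_inf (x y m : T) : Prop :=
  le m x /\ le m y /\ forall u, le u x -> le u y -> le u m.

Definition bounded_poset_with_antitone_involution (c : T -> T) (z o : T) : Prop :=
  partial_order /\ (forall x, le z x /\ le x o) /\
  (forall x y, le x y -> le (c y) (c x)) /\ (forall x, c (c x) = x).

Definition orth (c : T -> T) (x y : T) : Prop := le x (c y).

Definition orthogonal_poset (c : T -> T) : Prop :=
  forall x y, orth c x y -> exists s, is_sup x y s.

Definition is_complement (x y : T) : Prop :=
  set_eq (Lc (pair x y)) (Lc setP) /\ set_eq (Uc (pair x y)) (Uc setP).

(* distributive: L(U(x,y), z) = LU(L(x,z), L(y,z)) *)
Definition distributive_poset : Prop :=
  forall x y z,
    set_eq (Lc (setU1 (Uc (pair x y)) z))
           (Lc (Uc (setUn (Lc (pair x z)) (Lc (pair y z))))).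

End PosetDefs.

(* For x <= y, orthogonality gives s = x \/ y', and the involution turns it into
   m = s' = y /\ x'.  Since m <= x', the join t = x \/ m exists too, and
   t <= y.  Conversely, U(x, x') = U(P) puts y in L(U(x, x'), y), which by
   distributivity is LU(L(x, y), L(x', y)); so y <= t, because every lower bound
   of x and y lies below x <= t and every lower bound of x' and y below m <= t. *)

Lemma is_inf_comm {T : Type} {le : T -> T -> Prop} {x y m : T} :
  is_inf le x y m -> is_inf le y x m.
Proof. intros [Hmx [Hmy Hgreatest]]. repeat split; auto. Qed.

Section AntitoneInvolution.

Context {T : Type} {le : T -> T -> Prop} {c : T -> T}.
Hypothesis c_antitone : forall x y, le x y -> le (c y) (c x).
Hypothesis c_involutive : forall x, c (c x) = x.

Lemma le_compl_swap {x y : T} : le x (c y) -> le y (c x).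
Proof. intros Hxy. rewrite <- (c_involutive y). apply c_antitone, Hxy. Qed.

Lemma is_sup_compl {x y s : T} :
  is_sup le x y s -> is_inf le (c x) (c y) (c s).
Proof.
  intros [Hxs [Hys Hleast]].
  split; [apply c_antitone, Hxs | split; [apply c_antitone, Hys |]].
  intros u Hux Huy.
  apply le_compl_swap, Hleast; apply le_compl_swap; assumption.
Qed.

Lemma orthogonal_inf_compl {x y : T} :
  orthogonal_poset le c -> le x y -> exists m, is_inf le y (c x) m.
Proof.
  intros Horth Hxy.
  assert (Hperp : orth le c x (c y)) by (unfold orth; rewrite c_involutive; exact Hxy).
  destruct (Horth _ _ Hperp) as [s Hs].
  pose proof (is_sup_compl Hs) as Hinf. rewrite c_involutive in Hinf.
  exists (c s). apply is_inf_comm, Hinf.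
Qed.

End AntitoneInvolution.

Section DistributiveComplement.

Context {T : Type} {le : T -> T -> Prop}.
Hypothesis le_refl : forall x, le x x.
Hypothesis le_distributive : distributive_poset le.

Lemma le_of_complement_split {x x' y t : T} :
  is_complement le x x' ->
  (forall w, Lc le (pair x y) w -> le w t) ->
  (forall w, Lc le (pair x' y) w -> le w t) ->
  le y t.
Proof.
  intros [_ Hupper] Hx Hx'.
  apply (proj1 (le_distributive x x' y y)).
  - intros a [Ha | ->]; [| apply le_refl].
    apply (proj1 (Hupper a) Ha). exact I.
  - intros w [Hw | Hw]; [apply Hx | apply Hx']; exact Hw.
Qed.

Hypothesis le_trans : forall x y z, le x y -> le y z -> le x z.
Hypothesis le_antisym : forall x y, le x y -> le y x -> x = y.

Lemma sup_inf_complement_eq {x x' y m t : T} :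
  is_complement le x x' -> le x y -> is_inf le y x' m -> is_sup le x m t ->
  t = y.
Proof.
  intros Hcompl Hxy [Hmy [_ Hgreatest]] [Hxt [Hmt Hleast]].
  apply le_antisym; [apply Hleast; assumption |].
  apply (le_of_complement_split Hcompl); intros w Hw.
  - apply le_trans with x; [apply Hw; left |]; auto.
  - apply le_trans with m; [apply Hgreatest; apply Hw; [right | left] |]; auto.
Qed.

End DistributiveComplement.

Theorem lemma1 (T : Type) (le : T -> T -> Prop) (c : T -> T) (z o : T) :
  bounded_poset_with_antitone_involution le c z o ->
  orthogonal_poset le c ->
  distributive_poset le ->
  (forall x : T, is_complement le x (c x)) ->
  forall x y : T, le x y ->
    exists m : T, is_inf le y (c x) m /\ is_sup le x m y.
Proof.
  intros [[Hrefl [Hantisym Htrans]] [_ [Hanti Hinv]]] Horth Hdistr Hcompl x y Hxy.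
  destruct (orthogonal_inf_compl Hanti Hinv Horth Hxy) as [m Hm].
  assert (Hperp : orth le c x m)
    by (apply (le_compl_swap Hanti Hinv), Hm).
  destruct (Horth _ _ Hperp) as [t Ht].
  exists m. split; [exact Hm |].
  rewrite <- (sup_inf_complement_eq Hrefl Hdistr Htrans Hantisym (Hcompl x) Hxy Hm Ht).
  exact Ht.
Qed.
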